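(* Let $\alpha$ be a formula without points-to atoms with $\mathcal P(\alpha)\subseteq\mathcal P_r$, $s$ a store and $h':\mathcal L\to\mathcal L^{\kappa+\nu+\mu}$ a heap. If $(s,h')\models_{\mathcal R_r}\widehat\alpha$, then every location $\ell\in\mathrm{dom}(h')$ with $h'(\ell)=\vec\ell_\bot$ has a connection in $h'$, i.e. there is $\ell'\in\mathrm{dom}(h')$ with $h'(\ell')\ne\vec\ell_\bot$ such that $\ell$ is one of the last $\mu$ components of $h'(\ell')$.
   Context: Separation logic: variables, constant $\bot$; formulas from $x\not\approx x'$, $x\approx x'$, $x\mapsto(t_1,\dots,t_k)$, predicate atoms, $*$, $\vee$, $\exists$. SID: finite set of rules $p(x_1,\dots,x_n)\Leftarrow\pi$. $\mathcal P(\phi)$: predicates reachable (reflexively) from those of $\phi$ through rule bodies. Locations $\mathcal L$ with $\ell_\bot$; stores map variables and $\bot$ to locations with $s(x)=\ell_\bot$ iff $x=\bot$; heaps are finite partial maps $\mathcal L\to\mathcal L^k$ avoiding $\ell_\bot$ in the domain; standard SL semantics $\models$ (predicate atoms via rules with existential variables interpreted by an extension of the store). A rule is connected iff its body is $x_1\mapsto(t_1,\dots,t_k)*\rho$ with $\rho$ free of points-to atoms and every predicate atom in $\rho$ has first argument among $t_1,\dots,t_k$. Standing assumptions: $\mathcal R$ is an SID of progressing rules $p(x_1,\dots,x_n)\Leftarrow x_1\mapsto(y_1,\dots,y_\kappa)*\rho$ (part of a safe entailment problem $(\phi,\psi,\mathcal R)$), $\mathcal P_r=\mathcal P(\psi)$;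 $\vec w=(w_1,\dots,w_\nu)$, $\nu>0$, are variables not occurring in $\mathcal R$; stores considered have $w_1,\dots,w_\nu$ in their domain (hence $s(w_i)\neq\ell_\bot$); every rule of $\mathcal R$ has exactly $\mu$ existential variables. $\vec\bot$ ($\vec\ell_\bot$) is $\kappa+\nu+\mu$ copies of $\bot$ ($\ell_\bot$); $\mathsf{bot}$ is a unary predicate with single rule $\mathsf{bot}(x)\Leftarrow x\mapsto\vec\bot$, included in $\mathcal R_r$. Each $p\in\mathcal P_r$ of arity $n$ gets a fresh $\widehat p$ of arity $n+\nu$; $\widehat\alpha$ replaces each atom $p(x_1,\dots,x_n)$ by $\widehat p(x_1,\dots,x_n,\vec w)$. $\widehat{\mathcal R}_0$ consists of the rules $\widehat p(x_1,\dots,x_n,\vec w)\Leftarrow x_1\mapsto(y_1,\dots,y_\kappa,\vec w,z_1,\dots,z_\mu)\sigma*\widehat\rho\sigma*\mathop{*}_{i\in I}\mathsf{bot}(z_i)*\mathop{*}_{x\in\mathrm{dom}(\sigma)}x\approx\sigma(x)$ for every rule $p(x_1,\dots,x_n)\Leftarrow x_1\mapsto(y_1,\dots,y_\kappa)*\rho$ of $\mathcal R$ with $p\in\mathcal P_r$, fresh $z_1,\dots,z_\mu$, substitution $\sigma$ with $\mathrm{dom}(\sigma)\subseteq\mathrm{fv}(\rho)\setminus\{x_1\}$, $\mathrm{img}(\sigma)\subseteq\{w_1,\dots,w_\nu\}$, and $I\subseteq\{1,\dots,\mu\}$. $\mathcal R_r$ is the set of connected rules of $\widehat{\mathcal R}_0$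 together with the $\mathsf{bot}$ rule. *)

From Stdlib Require Import List Arith.
Import ListNotations.
Set Implicit Arguments.

Definition var := nat.
Definition loc := nat.
Definition lbot : loc := 0.

Inductive term := Bot | V (x : var).

Inductive form (P : Type) :=
| FNeq (t1 t2 : term)
| FEq (t1 t2 : term)
| FPto (t : term) (ts : list term)
| FPred (p : P) (ts : list term)
| FStar (f g : form P)
| FOr (f g : form P)
| FEx (x : var) (f : form P).
Arguments FNeq {P}. Arguments FEq {P}. Arguments FPto {P}.
Arguments FPred {P}. Arguments FStar {P}. Arguments FOr {P}. Arguments FEx {P}.

Record rule (P : Type) := mkRule { r_pred : P; r_params : list var; r_body : form P }.
Arguments mkRule {P}.

Definition term_vars (t : term) : list var :=
  match t with Bot => [] | V x => [x] end.

Fixpoint fv {P} (f : form P) : list var :=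
  match f with
  | FNeq t1 t2 | FEq t1 t2 => term_vars t1 ++ term_vars t2
  | FPto t ts => term_vars t ++ flat_map term_vars ts
  | FPred _ ts => flat_map term_vars ts
  | FStar f g | FOr f g => fv f ++ fv g
  | FEx x f => remove Nat.eq_dec x (fv f)
  end.

Fixpoint allvars {P} (f : form P) : list var :=
  match f with
  | FNeq t1 t2 | FEq t1 t2 => term_vars t1 ++ term_vars t2
  | FPto t ts => term_vars t ++ flat_map term_vars ts
  | FPred _ ts => flat_map term_vars ts
  | FStar f g | FOr f g => allvars f ++ allvars g
  | FEx x f => x :: allvars f
  end.

Fixpoint pred_atoms {P} (f : form P) : list (P * list term) :=
  match f with
  | FPred p ts => [(p, ts)]
  | FStar f g | FOr f g => pred_atoms f ++ pred_atoms g
  | FEx _ f => pred_atoms f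
  | _ => []
  end.

Fixpoint no_pto {P} (f : form P) : Prop :=
  match f with
  | FPto _ _ => False
  | FStar f g | FOr f g => no_pto f /\ no_pto g
  | FEx _ f => no_pto f
  | _ => True
  end.

(* P(phi): predicates reachable (reflexively) from those of phi via rule bodies *)
Inductive reach (R : list (rule nat)) (phi : form nat) : nat -> Prop :=
| reach_base p ts : In (p, ts) (pred_atoms phi) -> reach R phi p
| reach_step q r p ts :
    reach R phi q -> In r R -> r_pred r = q ->
    In (p, ts) (pred_atoms (r_body r)) -> reach R phi p.

Definition progressing (kappa : nat) (r : rule nat) : Prop :=
  NoDup (r_params r) /\
  exists x1 xs ys rho,
    r_params r = x1 :: xs /\
    r_body r = FStar (FPto (V x1) ys) rho /\
    length ys = kappa /\ no_pto rho.

(* the rule has exactly mu existential variables (variables of the body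
   that are not parameters) *)
Definition n_exvars (mu : nat) (r : rule nat) : Prop :=
  exists l, NoDup l /\ length l = mu /\
    forall y, In y l <-> (In y (fv (r_body r)) /\ ~ In y (r_params r)).

Definition connected {P} (r : rule P) : Prop :=
  exists x1 xs ts rho,
    r_params r = x1 :: xs /\
    r_body r = FStar (FPto (V x1) ts) rho /\
    no_pto rho /\
    forall q args, In (q, args) (pred_atoms rho) ->
      exists a rest, args = a :: rest /\ In a ts.

Inductive hsym := Hat (p : nat) | BotP.

Fixpoint hat_f (ws : list var) (f : form nat) : form hsym :=
  match f with
  | FNeq t1 t2 => FNeq t1 t2
  | FEq t1 t2 => FEq t1 t2
  | FPto t ts => FPto t ts
  | FPred p ts => FPred (Hat p) (ts ++ map V ws)
  | FStar f g => FStar (hat_f ws f) (hat_f ws g)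
  | FOr f g => FOr (hat_f ws f) (hat_f ws g)
  | FEx x f => FEx x (hat_f ws f)
  end.

Fixpoint sublook (sigma : list (var * var)) (x : var) : var :=
  match sigma with
  | [] => x
  | (a, b) :: t => if Nat.eqb a x then b else sublook t x
  end.

Definition subst_t (sigma : list (var * var)) (t : term) : term :=
  match t with Bot => Bot | V x => V (sublook sigma x) end.

Fixpoint subst_f {P} (sigma : list (var * var)) (f : form P) : form P :=
  match f with
  | FNeq t1 t2 => FNeq (subst_t sigma t1) (subst_t sigma t2)
  | FEq t1 t2 => FEq (subst_t sigma t1) (subst_t sigma t2)
  | FPto t ts => FPto (subst_t sigma t) (map (subst_t sigma) ts)
  | FPred p ts => FPred p (map (subst_t sigma) ts)
  | FStar f g => FStar (subst_f sigma f) (subst_f sigma g)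
  | FOr f g => FOr (subst_f sigma f) (subst_f sigma g)
  | FEx x f => FEx x (subst_f (filter (fun xw => negb (Nat.eqb (fst xw) x)) sigma) f)
  end.

Definition star_list {P} (base : form P) (fs : list (form P)) : form P :=
  fold_left (fun acc g => FStar acc g) fs base.

Definition bot_rule (k : nat) : rule hsym :=
  mkRule BotP [0] (FPto (V 0) (repeat Bot k)).

(* \hat p(x1..xn, w) <= x1 |-> (y1..y_kappa, w, z1..z_mu)sigma * \hat rho sigma
                         * *_{i in I} bot(z_i) * *_{x in dom sigma} x = sigma(x)
   (indices of I are 0-based: I subset {0..mu-1}) *)
Definition hat_rule (ws zs : list var) (sigma : list (var * var)) (I : list nat)
  (p : nat) (x1 : var) (xs : list var) (ys : list term) (rho : form nat) : rule hsym :=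
  mkRule (Hat p) (x1 :: xs ++ ws)
    (FStar (FPto (V x1) (map (subst_t sigma) (ys ++ map V ws ++ map V zs)))
       (star_list (subst_f sigma (hat_f ws rho))
          (map (fun i => FPred BotP [V (nth i zs 0)]) I ++
           map (fun xw => FEq (V (fst xw)) (V (snd xw))) sigma))).

(* R_r (as a set of rules; all choices of fresh z's, equivalent up to renaming) *)
Definition Rr (kappa mu : nat) (R : list (rule nat)) (psi : form nat)
  (ws : list var) (r : rule hsym) : Prop :=
  r = bot_rule (kappa + length ws + mu) \/
  exists p x1 xs ys rho zs sigma I,
    In (mkRule p (x1 :: xs) (FStar (FPto (V x1) ys) rho)) R /\
    reach R psi p /\
    NoDup zs /\ length zs = mu /\
    (forall z, In z zs ->
       ~ In z (x1 :: xs) /\ ~ In z (allvars (FStar (FPto (V x1) ys) rho)) /\ ~ In z ws) /\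
    NoDup (map fst sigma) /\
    (forall xw, In xw sigma ->
       In (fst xw) (fv rho) /\ fst xw <> x1 /\ In (snd xw) ws) /\
    NoDup I /\ (forall i, In i I -> i < mu) /\
    r = hat_rule ws zs sigma I p x1 xs ys rho /\
    connected r.

(* heaps: partial maps loc -> loc^k (finiteness etc. imposed separately) *)
Definition heap := loc -> option (list loc).

Definition is_heap (h : heap) : Prop :=
  (exists dom : list loc, forall l, h l <> None -> In l dom) /\ h lbot = None.

Definition emp (h : heap) : Prop := forall l, h l = None.

Definition hunion (h1 h2 h : heap) : Prop :=
  forall l, (h1 l = None \/ h2 l = None) /\
            h l = match h1 l with Some v => Some v | None => h2 l end.

Definition eval (s : var -> loc) (t : term) : loc :=
  match t with Bot => lbot | V x => s x end.

Definition upd (s : var -> loc) (x : var) (l : loc) : var -> loc :=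
  fun y => if Nat.eqb y x then l else s y.

(* (s,h) |=_Rs f ; predicate atoms unfold through rules, existential
   variables of the rule are interpreted by an extension of the store
   (values different from l_bot). *)
Inductive sat {P} (Rs : rule P -> Prop) : (var -> loc) -> heap -> form P -> Prop :=
| sat_eq s h t1 t2 : eval s t1 = eval s t2 -> emp h -> sat Rs s h (FEq t1 t2)
| sat_neq s h t1 t2 : eval s t1 <> eval s t2 -> emp h -> sat Rs s h (FNeq t1 t2)
| sat_pto s h t ts :
    eval s t <> lbot ->
    h (eval s t) = Some (map (eval s) ts) ->
    (forall l, l <> eval s t -> h l = None) ->
    sat Rs s h (FPto t ts)
| sat_pred s h p ts r s' :
    Rs r -> r_pred r = p ->
    Forall2 (fun x t => s' x = eval s t) (r_params r) ts ->
    (forall y, ~ In y (r_params r) -> s' y <> lbot) ->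
    sat Rs s' h (r_body r) ->
    sat Rs s h (FPred p ts)
| sat_star s h h1 h2 f g :
    hunion h1 h2 h -> sat Rs s h1 f -> sat Rs s h2 g -> sat Rs s h (FStar f g)
| sat_or_l s h f g : sat Rs s h f -> sat Rs s h (FOr f g)
| sat_or_r s h f g : sat Rs s h g -> sat Rs s h (FOr f g)
| sat_ex s h x f l : l <> lbot -> sat Rs (upd s x l) h f -> sat Rs s h (FEx x f).

From Stdlib Require Import List Arith Lia.
Import ListNotations.

(* In a model of \hat alpha, an all-bot cell can only be
   allocated by an unfolding of a bot atom.  The only bot atoms reachable
   from \hat alpha are those of a rule body of R_r, of the form
     x1 |-> (ys, ws, zs)sigma * ... * bot(z_i) * ...,
   and the points-to cell of that very body stores s(z_i) among its last mu
   components; this cell is not all-bot because it also stores the values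
   of the variables ws, which are never l_bot.

   We make this precise by an induction on the satisfaction relation with
   the invariant [bot_cells_accounted]: in a model (s,h) of a formula f in
   which every points-to atom mentions some w (the syntactic condition
   [guarded]), every all-bot cell of h is either connected in h or is the
   value of an argument of a bot atom of f.  For f = \hat alpha there are no
   bot atoms at all, which gives the theorem. *)

Fixpoint bot_args (f : form hsym) : list term :=
  match f with
  | FPred BotP ts => ts
  | FStar f g | FOr f g => bot_args f ++ bot_args g
  | FEx _ f => bot_args f
  | _ => []
  end.

(* The invariant on formulas: every points-to atom stores some w, the
   hat-atoms pass variables among ws as their last |ws| arguments (so ws
   stays non-bot along unfoldings), and no bot atom lies under a quantifier
   (its argument could not be evaluated in the outer store). *)
Fixpoint guarded (ws : list var) (f : form hsym) : Prop :=
  match f with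
  | FPto _ ts => exists w, In w ws /\ In (V w) ts
  | FStar f g | FOr f g => guarded ws f /\ guarded ws g
  | FEx _ f => guarded ws f /\ bot_args f = []
  | FPred (Hat _) ts =>
      exists ts0 ws', ts = ts0 ++ map V ws' /\ length ws' = length ws /\ incl ws' ws
  | _ => True
  end.

Lemma bot_args_hat (ws : list var) (f : form nat) : bot_args (hat_f ws f) = [].
Proof. induction f; simpl; try rewrite IHf1, IHf2; auto. Qed.

Lemma bot_args_subst (f : form hsym) :
  forall sigma, bot_args f = [] -> bot_args (subst_f sigma f) = [].
Proof.
  induction f; simpl; intros sigma H; auto.
  - destruct p; simpl; [reflexivity | now rewrite H].
  - apply app_eq_nil in H as [H1 H2]. now rewrite IHf1, IHf2.
  - apply app_eq_nil in H as [H1 H2]. now rewrite IHf1, IHf2.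
Qed.

Lemma bot_args_star_list (gs : list (form hsym)) :
  forall b, bot_args (star_list b gs) = bot_args b ++ flat_map bot_args gs.
Proof.
  unfold star_list; induction gs as [|g gs IH]; intros b; simpl.
  - now rewrite app_nil_r.
  - rewrite IH; simpl. now rewrite app_assoc.
Qed.

Lemma guarded_star_list (ws : list var) (gs : list (form hsym)) :
  forall b, guarded ws b -> (forall g, In g gs -> guarded ws g) ->
  guarded ws (star_list b gs).
Proof.
  unfold star_list; induction gs as [|g gs IH]; intros b Hb Hgs; simpl; auto.
  apply IH.
  - split; [exact Hb | apply Hgs; now left].
  - intros g' Hg'. apply Hgs. now right.
Qed.

Lemma sublook_in (ws : list var) (sigma : list (var * var)) (x : var) :
  (forall xw, In xw sigma -> In (snd xw) ws) -> In x ws -> In (sublook sigma x) ws.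
Proof.
  induction sigma as [|[a b] sigma IH]; simpl; intros Hsig Hx; auto.
  destruct (Nat.eqb a x).
  - exact (Hsig (a, b) (or_introl eq_refl)).
  - auto.
Qed.

Lemma sublook_notin (sigma : list (var * var)) (x : var) :
  (forall xw, In xw sigma -> fst xw <> x) -> sublook sigma x = x.
Proof.
  induction sigma as [|[a b] sigma IH]; simpl; intros H; auto.
  destruct (Nat.eqb_spec a x) as [E|_].
  - exfalso. exact (H (a, b) (or_introl eq_refl) E).
  - auto.
Qed.

Lemma guarded_hat (ws : list var) (f : form nat) :
  no_pto f -> guarded ws (hat_f ws f).
Proof.
  induction f; simpl; try tauto.
  - intros _. exists ts, ws. repeat split. apply incl_refl.
  - intros H. split; auto. apply bot_args_hat.
Qed.

Lemma guarded_subst (ws : list var) (f : form hsym) :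
  forall sigma, (forall xw, In xw sigma -> In (snd xw) ws) ->
  guarded ws f -> guarded ws (subst_f sigma f).
Proof.
  induction f; simpl; intros sigma Hsig Hf; try tauto.
  - destruct Hf as (w & Hw & Hin). exists (sublook sigma w). split.
    + now apply sublook_in.
    + exact (in_map (subst_t sigma) ts (V w) Hin).
  - destruct p; auto.
    destruct Hf as (ts0 & ws' & -> & Hlen & Hincl).
    exists (map (subst_t sigma) ts0), (map (sublook sigma) ws').
    rewrite map_app, !map_map, length_map. repeat split; auto.
    intros w Hw. apply in_map_iff in Hw as (w' & <- & Hw').
    apply sublook_in; auto.
  - destruct Hf; split; auto.
  - destruct Hf; split; auto.
  - destruct Hf as [Hf Hb]. split.
    + apply IHf; auto. intros xw Hxw. apply filter_In in Hxw. now apply Hsig.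
    + now apply bot_args_subst.
Qed.

Lemma fv_allvars {P} (f : form P) (y : var) : In y (fv f) -> In y (allvars f).
Proof.
  induction f; simpl; auto; intros H.
  - apply in_app_or in H; apply in_or_app; tauto.
  - apply in_app_or in H; apply in_or_app; tauto.
  - apply in_remove in H; tauto.
Qed.

Lemma pto_not_bot (ws : list var) (s : var -> loc) (ts : list term) (w : var) (K : nat) :
  (forall w, In w ws -> s w <> lbot) -> In w ws -> In (V w) ts ->
  map (eval s) ts <> repeat lbot K.
Proof.
  intros Hs Hw Hin E.
  assert (Hv : In (s w) (repeat lbot K)) by (rewrite <- E; exact (in_map (eval s) ts (V w) Hin)).
  apply repeat_spec in Hv. exact (Hs w Hw Hv).
Qed.

Lemma Forall2_app_tail {A B} (P : A -> B -> Prop) (a b : list A) (c d : list B) :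
  Forall2 P (a ++ b) (c ++ d) -> length b = length d -> Forall2 P b d.
Proof.
  intros H Hbd.
  assert (Hac : length a = length c)
    by (apply Forall2_length in H; rewrite !length_app in H; lia).
  revert c H Hac. induction a as [|x a IH]; intros [|y c] H Hac; try discriminate; auto.
  apply Forall2_cons_iff in H as [_ H]. apply (IH c H). simpl in Hac. lia.
Qed.

Lemma params_ws_not_bot (s s' : var -> loc) (ws ws' : list var) :
  Forall2 (fun x t => s' x = eval s t) ws (map V ws') -> incl ws' ws ->
  (forall w, In w ws -> s w <> lbot) -> forall w, In w ws -> s' w <> lbot.
Proof.
  intros H Hincl Hs. assert (Hs' : forall w, In w ws' -> s w <> lbot) by auto.
  clear Hincl Hs. revert ws' H Hs'.
  induction ws as [|a ws IH]; intros ws' H Hs' w Hw; [contradiction|].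
  destruct ws' as [|a' ws']; [inversion H|].
  apply Forall2_cons_iff in H as [Ha H]. destruct Hw as [<-|Hw].
  - rewrite Ha. apply Hs'. now left.
  - apply (IH ws'); auto. intros y Hy. apply Hs'. now right.
Qed.

Lemma progressing_rule_shape (kappa : nat) (R : list (rule nat)) (p x1 : var)
  (xs : list var) (ys : list term) (rho : form nat) :
  (forall r, In r R -> progressing kappa r) ->
  In (mkRule p (x1 :: xs) (FStar (FPto (V x1) ys) rho)) R ->
  length ys = kappa /\ no_pto rho.
Proof.
  intros Hprog Hin.
  destruct (Hprog _ Hin) as [_ (x1' & xs' & ys' & rho' & _ & E & Hlen & Hrho)].
  simpl in E. injection E as -> -> ->. auto.
Qed.

Lemma hat_record_stores_w (sigma : list (var * var)) (ys : list term) (ws zs : list var)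
  (w : var) :
  In w ws -> In (V (sublook sigma w)) (map (subst_t sigma) (ys ++ map V ws ++ map V zs)).
Proof.
  intros Hw. apply (in_map (subst_t sigma) _ (V w)).
  apply in_or_app; right; apply in_or_app; left. now apply in_map.
Qed.

Lemma hat_record_nth (s : var -> loc) (sigma : list (var * var)) (ys : list term)
  (ws zs : list var) (i : nat) :
  i < length zs -> (forall xw, In xw sigma -> fst xw <> nth i zs 0) ->
  nth (length ys + length ws + i)
      (map (eval s) (map (subst_t sigma) (ys ++ map V ws ++ map V zs))) lbot
  = s (nth i zs 0).
Proof.
  intros Hi Hdom. rewrite map_map.
  rewrite (nth_indep _ lbot (eval s (subst_t sigma (V 0))))
    by (rewrite length_map, !length_app, !length_map; lia).
  rewrite (map_nth (fun t => eval s (subst_t sigma t))).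
  rewrite <- Nat.add_assoc, app_nth2_plus, <- (length_map V ws), app_nth2_plus, map_nth.
  simpl. now rewrite sublook_notin.
Qed.

Lemma hat_rule_bot_args (ws zs : list var) (sigma : list (var * var)) (I : list nat)
  (p x1 : var) (xs : list var) (ys : list term) (rho : form nat) (t : term) :
  In t (bot_args (r_body (hat_rule ws zs sigma I p x1 xs ys rho))) ->
  exists i, In i I /\ t = V (nth i zs 0).
Proof.
  simpl. rewrite bot_args_star_list, bot_args_subst by apply bot_args_hat. simpl.
  intros Ht. apply in_flat_map in Ht as (g & Hg & Htg).
  apply in_app_or in Hg as [Hg|Hg]; apply in_map_iff in Hg as (x & <- & Hx);
    simpl in Htg; [|contradiction].
  destruct Htg as [<-|[]]. eauto.
Qed.

Lemma hat_rule_body_guarded (ws zs : list var) (sigma : list (var * var)) (I : list nat)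
  (p x1 : var) (xs : list var) (ys : list term) (rho : form nat) (w0 : var) :
  In w0 ws -> no_pto rho -> (forall xw, In xw sigma -> In (snd xw) ws) ->
  guarded ws (r_body (hat_rule ws zs sigma I p x1 xs ys rho)).
Proof.
  intros Hw0 Hrho Hsig. simpl. split.
  - exists (sublook sigma w0). split.
    + now apply sublook_in.
    + now apply hat_record_stores_w.
  - apply guarded_star_list.
    + apply guarded_subst; auto. now apply guarded_hat.
    + intros g Hg. apply in_app_or in Hg as [Hg|Hg];
        apply in_map_iff in Hg as (x & <- & _); simpl; trivial.
Qed.

Definition has_connection (kappa nu mu : nat) (h : heap) (l : loc) : Prop :=
  exists l' v, h l' = Some v /\ v <> repeat lbot (kappa + nu + mu) /\
    exists i, i < mu /\ nth (kappa + nu + i) v lbot = l.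

Lemma has_connection_mono (kappa nu mu : nat) (h1 h : heap) (l : loc) :
  (forall l v, h1 l = Some v -> h l = Some v) ->
  has_connection kappa nu mu h1 l -> has_connection kappa nu mu h l.
Proof. intros Hsub (l' & v & Hv & Hnb & Hi). exists l', v. auto. Qed.

Lemma hunion_incl_l (h1 h2 h : heap) :
  hunion h1 h2 h -> forall l v, h1 l = Some v -> h l = Some v.
Proof. intros Hu l v Hv. destruct (Hu l) as [_ ->]. now rewrite Hv. Qed.

Lemma hunion_incl_r (h1 h2 h : heap) :
  hunion h1 h2 h -> forall l v, h2 l = Some v -> h l = Some v.
Proof.
  intros Hu l v Hv. destruct (Hu l) as [[E|E] ->]; [now rewrite E | congruence].
Qed.

Lemma sat_pto_inv {P} (Rs : rule P -> Prop) (s : var -> loc) (h : heap)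
  (t : term) (ts : list term) :
  sat Rs s h (FPto t ts) ->
  h (eval s t) = Some (map (eval s) ts) /\ forall l, l <> eval s t -> h l = None.
Proof. intros H. inversion H; subst. auto. Qed.

Lemma sat_star_pto_cell {P} (Rs : rule P -> Prop) (s : var -> loc) (h : heap)
  (t : term) (ts : list term) (g : form P) :
  sat Rs s h (FStar (FPto t ts) g) -> h (eval s t) = Some (map (eval s) ts).
Proof.
  intros H. inversion H as [| | | |? ? h1 h2 ? ? Hu H1 _| | |]; subst.
  apply (hunion_incl_l h1 h2 h Hu). now apply sat_pto_inv in H1 as [E _].
Qed.

Lemma hat_body_connects (Rs : rule hsym -> Prop) (kappa : nat) (ws zs : list var)
  (sigma : list (var * var)) (I : list nat) (p x1 : var) (xs : list var)
  (ys : list term) (rho : form nat) (s : var -> loc) (h : heap) (l : loc) (w0 : var) :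
  length ys = kappa -> In w0 ws -> (forall w, In w ws -> s w <> lbot) ->
  (forall xw, In xw sigma -> In (snd xw) ws) ->
  (forall i, In i I -> i < length zs) ->
  (forall xw z, In xw sigma -> In z zs -> fst xw <> z) ->
  sat Rs s h (r_body (hat_rule ws zs sigma I p x1 xs ys rho)) ->
  In l (map (eval s) (bot_args (r_body (hat_rule ws zs sigma I p x1 xs ys rho)))) ->
  has_connection kappa (length ws) (length zs) h l.
Proof.
  intros Hys Hw0 Hs Hsig HI Hfresh Hsat Hl.
  apply in_map_iff in Hl as (t & <- & Ht).
  apply hat_rule_bot_args in Ht as (i & Hi & ->).
  exists (eval s (V x1)),
    (map (eval s) (map (subst_t sigma) (ys ++ map V ws ++ map V zs))).
  split; [exact (sat_star_pto_cell _ _ _ _ _ _ Hsat) |].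
  split.
  - apply (pto_not_bot ws s _ (sublook sigma w0)); auto.
    + now apply sublook_in.
    + now apply hat_record_stores_w.
  - exists i. split; auto. subst kappa. apply hat_record_nth; auto.
    intros xw Hxw. apply Hfresh; auto. apply nth_In; auto.
Qed.

Section Invariant.

Variables (kappa mu : nat) (R : list (rule nat)) (psi : form nat) (ws : list var).
Hypothesis HR_prog : forall r, In r R -> progressing kappa r.
Hypothesis Hws : ws <> [].

Lemma bot_cells_accounted (s : var -> loc) (h : heap) (f : form hsym) :
  sat (Rr kappa mu R psi ws) s h f ->
  (forall w, In w ws -> s w <> lbot) -> guarded ws f ->
  forall l, h l = Some (repeat lbot (kappa + length ws + mu)) ->
  has_connection kappa (length ws) mu h l \/ In l (map (eval s) (bot_args f)).
Proof.
  induction 1 as [s h t1 t2 _ Hemp|s h t1 t2 _ Hemp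
                 |s h t ts _ Hcell Hnone
                 |s h p ts r s' Hr Hp Hargs _ Hbody IH
                 |s h h1 h2 f g Hu _ IH1 _ IH2
                 |s h f g _ IH|s h f g _ IH
                 |s h x f l0 Hl0 _ IH];
    intros Hs Hg l Hl; simpl in Hg.
  - now rewrite Hemp in Hl.
  - now rewrite Hemp in Hl.
  - (* a points-to cell stores some w, hence is not all-bot *)
    destruct Hg as (w & Hw & Hin).
    destruct (Nat.eq_dec l (eval s t)) as [->|Hne]; [|now rewrite Hnone in Hl].
    rewrite Hcell in Hl. injection Hl as E.
    destruct (pto_not_bot ws s ts w _ Hs Hw Hin E).
  - destruct Hr as [-> | (q & x1 & xs & ys & rho & zs & sigma & I & HinR & _ & _ & Hzs
                          & Hzfresh & _ & Hsig & _ & HI & -> & _)]; subst p.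
    + (* bot(t): the cell allocated is the value of t *)
      right. inversion Hargs as [|? t ? ? Ht Hnil]; subst. inversion Hnil; subst.
      apply sat_pto_inv in Hbody as [_ Hnone]. simpl in *.
      destruct (Nat.eq_dec l (s' 0)) as [->|Hne]; [now left | now rewrite Hnone in Hl].
    + (* hat rule: a bot atom of the body is connected by the body's cell *)
      left. simpl in Hg, Hargs.
      destruct (progressing_rule_shape kappa R q x1 xs ys rho HR_prog HinR) as [Hys Hrho].
      assert (Hws0 : exists w0, In w0 ws)
        by (destruct ws as [|w0 ?]; [contradiction | exists w0; now left]).
      destruct Hws0 as [w0 Hw0].
      destruct Hg as (ts0 & ws' & -> & Hlen & Hincl).
      assert (Hs' : forall w, In w ws -> s' w <> lbot).
      { apply (params_ws_not_bot s s' ws ws'); auto.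
        apply (Forall2_app_tail _ (x1 :: xs) ws ts0 (map V ws')); [exact Hargs|].
        now rewrite length_map. }
      destruct (IH Hs' (hat_rule_body_guarded ws zs sigma I q x1 xs ys rho w0 Hw0 Hrho
                          (fun xw Hxw => proj2 (proj2 (Hsig xw Hxw)))) l Hl)
        as [C|C]; [exact C|].
      rewrite <- Hzs.
      apply (hat_body_connects (Rr kappa mu R psi ws) kappa ws zs sigma I
                               q x1 xs ys rho s' h l w0); auto.
      * intros xw Hxw. exact (proj2 (proj2 (Hsig xw Hxw))).
      * intros i Hi. rewrite Hzs. now apply HI.
      * (* annotations are fresh, so sigma, whose domain lies in fv(rho), fixes them *)
        intros xw z Hxw Hz E. subst z.
        destruct (Hzfresh _ Hz) as (_ & Hnot & _). apply Hnot.
        simpl. right. apply in_or_app. right. apply fv_allvars, (Hsig xw Hxw).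
  - destruct Hg as [Hg1 Hg2]. simpl; rewrite map_app.
    destruct (Hu l) as [_ E]. rewrite E in Hl.
    destruct (h1 l) eqn:E1.
    + injection Hl as ->.
      destruct (IH1 Hs Hg1 l E1) as [C|C].
      * left. exact (has_connection_mono _ _ _ _ _ _ (hunion_incl_l _ _ _ Hu) C).
      * right. apply in_or_app. now left.
    + destruct (IH2 Hs Hg2 l Hl) as [C|C].
      * left. exact (has_connection_mono _ _ _ _ _ _ (hunion_incl_r _ _ _ Hu) C).
      * right. apply in_or_app. now right.
  - destruct Hg as [Hg _]. simpl; rewrite map_app.
    destruct (IH Hs Hg l Hl); [now left | right; apply in_or_app; now left].
  - destruct Hg as [_ Hg]. simpl; rewrite map_app.
    destruct (IH Hs Hg l Hl); [now left | right; apply in_or_app; now right].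
  - (* under a quantifier there are no bot atoms *)
    destruct Hg as [Hg Hnobot].
    assert (Hs' : forall w, In w ws -> upd s x l0 w <> lbot)
      by (intros w Hw; unfold upd; destruct (Nat.eqb w x); auto).
    destruct (IH Hs' Hg l Hl) as [C|C]; [now left|].
    rewrite Hnobot in C. contradiction.
Qed.

End Invariant.

Theorem mainTheorem17
  (kappa nu mu : nat) (R : list (rule nat)) (psi : form nat) (ws : list var)
  (HR_prog : forall r, In r R -> progressing kappa r)
  (HR_mu : forall r, In r R -> n_exvars mu r)
  (Hws_len : length ws = nu) (Hnu : 0 < nu) (Hws_nodup : NoDup ws)
  (Hws_fresh : forall w r, In w ws -> In r R ->
      ~ In w (r_params r) /\ ~ In w (allvars (r_body r)))
  (alpha : form nat) (Halpha_pto : no_pto alpha)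
  (Halpha_P : forall p, reach R alpha p -> reach R psi p)
  (s : var -> loc) (Hs : forall x, s x <> lbot)
  (h' : heap) (Hh' : is_heap h')
  (Hh'_len : forall l v, h' l = Some v -> length v = kappa + nu + mu)
  (Hsat : sat (Rr kappa mu R psi ws) s h' (hat_f ws alpha)) :
  forall l, h' l = Some (repeat lbot (kappa + nu + mu)) ->
  exists l' v, h' l' = Some v /\ v <> repeat lbot (kappa + nu + mu) /\
    exists i, i < mu /\ nth (kappa + nu + i) v lbot = l.
Proof.
  intros l Hl. subst nu.
  assert (Hws : ws <> []) by (intros ->; simpl in Hnu; lia).
  destruct (bot_cells_accounted kappa mu R psi ws HR_prog Hws s h' (hat_f ws alpha) Hsat)
    with (l := l) as [Hconn | Hbot]; auto.
  - apply guarded_hat, Halpha_pto.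
  -
    rewrite bot_args_hat in Hbot. contradiction.
Qed.
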